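(* For every $n\ge 2$ the Jones–Wenzl projectors in $\mathcal{TL}_0(\Bbbk)$ satisfy $$\mathrm{j}_n=(\mathrm{j}_{n-1}\otimes\mathrm{id}_{\mathbf 1})-(\mathrm{j}_{n-1}\otimes\mathrm{id}_{\mathbf 1})\circ(\mathrm{id}_{\mathbf{n-2}}\otimes\mathrm{cup})\circ(\mathrm{id}_{\mathbf{n-2}}\otimes\mathrm{cap})\circ(\mathrm{j}_{n-1}\otimes\mathrm{id}_{\mathbf 1}).$$
   Context: $\Bbbk$ is a field. $\mathcal{TL}_0(\Bbbk)$ is the strict $\Bbbk$-linear monoidal category with objects $\mathbf 0,\mathbf 1,\dots$, $\mathbf m\otimes\mathbf n=\mathbf{m+n}$, generated by $\mathrm{cup}:\mathbf 0\to\mathbf 2$ and $\mathrm{cap}:\mathbf 2\to\mathbf 0$ subject to $(\mathrm{id}_{\mathbf 1}\otimes\mathrm{cap})\circ(\mathrm{cup}\otimes\mathrm{id}_{\mathbf 1})=0=(\mathrm{cap}\otimes\mathrm{id}_{\mathbf 1})\circ(\mathrm{id}_{\mathbf 1}\otimes\mathrm{cup})$ and $\mathrm{cap}\circ\mathrm{cup}=\mathrm{id}_{\mathbf 0}$. A subset $I\subseteq\{1,\dots,n\}$ is apt if $n\notin I$ and no two elements of $I$ are consecutive; $\mathrm{cap}_{I,n}:\mathbf n\to\mathbf{n-2|I|}$ has caps joining strands $i,i+1$ for $i\in I$ and through-strands elsewhere, $\mathrm{cup}_{I,n}$ is its vertical reflection, and $\mathrm{j}_n=\sum_{I\text{ apt}}(-1)^{|I|}\mathrm{cup}_{I,n}\circ\mathrm{cap}_{I,n}\in\mathrm{End}(\mathbf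 n)$. *)

(* The Temperley-Lieb category TL_0(k) is encoded by its
   presentation: formal (untyped) string-diagram terms built from id, cup, cap,
   composition, tensor product and k-linear combinations, with a typing
   function, modulo the smallest congruence containing the axioms of a strict
   k-linear monoidal category (objects = nat, m (x) n = m + n) and the three
   defining relations of TL_0. *)
From HB Require Import structures.
From mathcomp Require Import all_boot all_order all_algebra.
Set Implicit Arguments. Unset Strict Implicit. Unset Printing Implicit Defensive.
Import GRing.Theory.
Local Open Scope ring_scope.

Section TL.
Variable K : fieldType.

Inductive tm : Type :=
| tid : nat -> tm
| tcup : tm
| tcap : tm
| tcomp : tm -> tm -> tm          (* tcomp g f = g o f *)
| ttens : tm -> tm -> tm
| tzero : nat -> nat -> tm
| tadd : tm -> tm -> tm
| tscal : K -> tm -> tm.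

Fixpoint ty (t : tm) : option (nat * nat) :=
  match t with
  | tid n => Some (n, n)
  | tcup => Some (0%N, 2%N)
  | tcap => Some (2%N, 0%N)
  | tcomp g f =>
      match ty f, ty g with
      | Some (a, b), Some (b', c) => if b == b' then Some (a, c) else None
      | _, _ => None
      end
  | ttens f g =>
      match ty f, ty g with
      | Some (a, b), Some (c, d) => Some ((a + c)%N, (b + d)%N)
      | _, _ => None
      end
  | tzero a b => Some (a, b)
  | tadd f g =>
      match ty f, ty g with
      | Some p, Some q => if p == q then Some p else None
      | _, _ => None
      end
  | tscal _ f => ty f
  end.

Inductive eqv : tm -> tm -> Prop :=
| e_refl t : eqv t t
| e_sym t u : eqv t u -> eqv u t
| e_trans t u v : eqv t u -> eqv u v -> eqv t v
| e_comp g g' f f' : eqv g g' -> eqv f f' -> eqv (tcomp g f) (tcomp g' f')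
| e_tens f f' g g' : eqv f f' -> eqv g g' -> eqv (ttens f g) (ttens f' g')
| e_add f f' g g' : eqv f f' -> eqv g g' -> eqv (tadd f g) (tadd f' g')
| e_scal c f f' : eqv f f' -> eqv (tscal c f) (tscal c f')
| e_assoc a b c d f g h : ty f = Some (a, b) -> ty g = Some (b, c) ->
    ty h = Some (c, d) -> eqv (tcomp h (tcomp g f)) (tcomp (tcomp h g) f)
| e_idl a b f : ty f = Some (a, b) -> eqv (tcomp (tid b) f) f
| e_idr a b f : ty f = Some (a, b) -> eqv (tcomp f (tid a)) f
| e_tassoc a b c d e h f g k : ty f = Some (a, b) -> ty g = Some (c, d) ->
    ty k = Some (e, h) -> eqv (ttens (ttens f g) k) (ttens f (ttens g k))
| e_tunitl a b f : ty f = Some (a, b) -> eqv (ttens (tid 0) f) f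
| e_tunitr a b f : ty f = Some (a, b) -> eqv (ttens f (tid 0)) f
| e_tid m n : eqv (ttens (tid m) (tid n)) (tid (m + n))
| e_interchange a b c a' b' c' f g f' g' :
    ty f = Some (a, b) -> ty g = Some (b, c) ->
    ty f' = Some (a', b') -> ty g' = Some (b', c') ->
    eqv (ttens (tcomp g f) (tcomp g' f')) (tcomp (ttens g g') (ttens f f'))
| e_addA a b f g h : ty f = Some (a, b) -> ty g = Some (a, b) ->
    ty h = Some (a, b) -> eqv (tadd f (tadd g h)) (tadd (tadd f g) h)
| e_addC a b f g : ty f = Some (a, b) -> ty g = Some (a, b) ->
    eqv (tadd f g) (tadd g f)
| e_add0 a b f : ty f = Some (a, b) -> eqv (tadd f (tzero a b)) f
| e_scal1 a b f : ty f = Some (a, b) -> eqv (tscal 1 f) f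
| e_scal0 a b f : ty f = Some (a, b) -> eqv (tscal 0 f) (tzero a b)
| e_scalA a b c d f : ty f = Some (a, b) ->
    eqv (tscal c (tscal d f)) (tscal (c * d) f)
| e_scalDl a b c d f : ty f = Some (a, b) ->
    eqv (tscal (c + d) f) (tadd (tscal c f) (tscal d f))
| e_scalDr a b c f g : ty f = Some (a, b) -> ty g = Some (a, b) ->
    eqv (tscal c (tadd f g)) (tadd (tscal c f) (tscal c g))
| e_compDl a b c g g' f : ty f = Some (a, b) -> ty g = Some (b, c) ->
    ty g' = Some (b, c) ->
    eqv (tcomp (tadd g g') f) (tadd (tcomp g f) (tcomp g' f))
| e_compDr a b c g f f' : ty f = Some (a, b) -> ty f' = Some (a, b) ->
    ty g = Some (b, c) ->
    eqv (tcomp g (tadd f f')) (tadd (tcomp g f) (tcomp g f'))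
| e_compZl a b c d g f : ty f = Some (a, b) -> ty g = Some (b, c) ->
    eqv (tcomp (tscal d g) f) (tscal d (tcomp g f))
| e_compZr a b c d g f : ty f = Some (a, b) -> ty g = Some (b, c) ->
    eqv (tcomp g (tscal d f)) (tscal d (tcomp g f))
| e_comp0l a b c f : ty f = Some (a, b) ->
    eqv (tcomp (tzero b c) f) (tzero a c)
| e_comp0r a b c g : ty g = Some (b, c) ->
    eqv (tcomp g (tzero a b)) (tzero a c)
| e_tensDl a b c d f f' g : ty f = Some (a, b) -> ty f' = Some (a, b) ->
    ty g = Some (c, d) ->
    eqv (ttens (tadd f f') g) (tadd (ttens f g) (ttens f' g))
| e_tensDr a b c d f g g' : ty f = Some (a, b) -> ty g = Some (c, d) ->
    ty g' = Some (c, d) ->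
    eqv (ttens f (tadd g g')) (tadd (ttens f g) (ttens f g'))
| e_tensZl a b c d e f g : ty f = Some (a, b) -> ty g = Some (c, d) ->
    eqv (ttens (tscal e f) g) (tscal e (ttens f g))
| e_tensZr a b c d e f g : ty f = Some (a, b) -> ty g = Some (c, d) ->
    eqv (ttens f (tscal e g)) (tscal e (ttens f g))
| e_tens0l a b c d g : ty g = Some (c, d) ->
    eqv (ttens (tzero a b) g) (tzero (a + c) (b + d))
| e_tens0r a b c d f : ty f = Some (a, b) ->
    eqv (ttens f (tzero c d)) (tzero (a + c) (b + d))
| e_zigzag1 : eqv (tcomp (ttens (tid 1) tcap) (ttens tcup (tid 1))) (tzero 1 1)
| e_zigzag2 : eqv (tcomp (ttens tcap (tid 1)) (ttens (tid 1) tcup)) (tzero 1 1)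
| e_circle : eqv (tcomp tcap tcup) (tid 0).

(* Subsets I of {1,...,n} are encoded as I : {set 'I_n}, the ordinal i
   standing for the position i+1. *)
Definition apt (n : nat) (I : {set 'I_n}) : bool :=
  [forall i : 'I_n, (i \in I) ==> (i.+1 < n)%N] &&
  [forall i : 'I_n, forall j : 'I_n, (i \in I) && (j \in I) ==> (j != i.+1 :> nat)].

Definition memI (n : nat) (I : {set 'I_n}) (k : nat) : bool :=
  [exists i in I, nat_of_ord i == k].

(* cap_{I,n}: scanning strands left to right, k = 0-based position of the
   current strand, r = number of remaining strands; a cap on strands k,k+1
   (positions k+1,k+2) when k+1 is in I, a through strand otherwise. *)
Fixpoint capw (P : nat -> bool) (k r : nat) : tm :=
  match r with
  | 0 => tid 0
  | r1.+1 =>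
      match r1 with
      | 0 => tid 1
      | r'.+1 => if P k then ttens tcap (capw P (k + 2) r')
                 else ttens (tid 1) (capw P k.+1 r1)
      end
  end.

Fixpoint cupw (P : nat -> bool) (k r : nat) : tm :=
  match r with
  | 0 => tid 0
  | r1.+1 =>
      match r1 with
      | 0 => tid 1
      | r'.+1 => if P k then ttens tcup (cupw P (k + 2) r')
                 else ttens (tid 1) (cupw P k.+1 r1)
      end
  end.

Definition capI (n : nat) (I : {set 'I_n}) : tm := capw (memI I) 0 n.
Definition cupI (n : nat) (I : {set 'I_n}) : tm := cupw (memI I) 0 n.

Definition jw (n : nat) : tm :=
  \big[tadd/tzero n n]_(I : {set 'I_n} | apt I)
     tscal ((-1) ^+ #|I|) (tcomp (cupI I) (capI I)).

End TL.

From HB Require Import structures.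
From mathcomp Require Import all_boot all_order all_algebra.
From mathcomp Require Import zify.
From Stdlib Require Import Setoid Morphisms.
Set Implicit Arguments. Unset Strict Implicit. Unset Printing Implicit Defensive.
Import GRing.Theory.
Local Open Scope ring_scope.

(* Splitting the sum defining j_(m+2) according to whether the last admissible
   position m+1 carries a cap gives j_(m+2) = j_(m+1) (x) id_1 - j_m (x) (cup o cap).
   By the zigzag relations, j_(m+1) (x) id_1 absorbs a cup (resp. cap) placed on
   the last two strands into j_m, and j_n is idempotent by induction.  Hence the
   correction term on the right-hand side equals
   (j_m (x) cup) o (j_m (x) cap) = j_m (x) (cup o cap). *)

Section AptSets.
Variable n : nat.
Implicit Types (A B : {set 'I_n}).

Lemma memI_ord A (i : 'I_n) : memI A i = (i \in A).
Proof.
apply/existsP/idP => [[j /andP[jA /eqP E]]|iA]; last by exists i; rewrite iA eqxx.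
by have -> : i = j by apply: val_inj.
Qed.

Lemma memI_lt A k : memI A k -> (k < n)%N.
Proof. by case/existsP => j /andP[_ /eqP <-]. Qed.

Lemma memI_inj A B : memI A =1 memI B -> A = B.
Proof. by move=> AB; apply/setP => i; rewrite -!memI_ord AB. Qed.

Lemma memI_setU1 A (x : 'I_n) k : memI (x |: A) k = (x == k :> nat) || memI A k.
Proof.
apply/existsP/orP => [[j /andP[]]|[/eqP E|/existsP[j /andP[jA E]]]].
- rewrite in_setU1 => /orP[/eqP->|jA] /eqP E; first by left; rewrite E.
  by right; apply/existsP; exists j; rewrite jA E eqxx.
- by exists x; rewrite in_setU1 eqxx /= E.
- by exists j; rewrite in_setU1 jA orbT E.
Qed.

Lemma memI_set0 k : memI (@set0 'I_n) k = false.
Proof. by apply/existsP => -[j]; rewrite in_set0. Qed.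

Lemma aptP A : apt A <->
  (forall k, memI A k -> (k.+1 < n)%N) /\ (forall k, memI A k -> ~~ memI A k.+1).
Proof.
split.
  case/andP => /forallP A1 /forallP A2; split.
    by move=> k /existsP[i /andP[iA /eqP <-]]; have := A1 i; rewrite iA.
  move=> k /existsP[i /andP[iA /eqP Ei]]; apply/negP => /existsP[j /andP[jA /eqP Ej]].
  by have := A2 i; move/forallP/(_ j); rewrite iA jA /= Ei Ej eqxx.
case=> A1 A2; apply/andP; split; apply/forallP => i.
  by apply/implyP => iA; apply: A1; rewrite memI_ord.
apply/forallP => j; apply/implyP => /andP[iA jA]; apply/eqP => E.
by have := A2 i; rewrite memI_ord iA -E memI_ord jA => /(_ isT).
Qed.

End AptSets.

Definition recast_set n p (A : {set 'I_p}) : {set 'I_n} := [set i : 'I_n | memI A i].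

Lemma memI_recast_set n p (A : {set 'I_p}) k :
  memI (recast_set n A) k = (k < n)%N && memI A k.
Proof.
apply/existsP/andP => [[j /andP[]]|[kn Ak]].
  by rewrite inE => Aj /eqP <-; split.
by exists (Ordinal kn); rewrite inE Ak eqxx.
Qed.

Lemma card_recast_set n p (A : {set 'I_p}) : (p <= n)%N -> #|recast_set n A| = #|A|.
Proof.
move=> pn; have -> : recast_set n A = widen_ord pn @: A.
  apply/setP => i; rewrite inE.
  apply/existsP/imsetP => [[j /andP[jA /eqP E]]|[j jA ->]].
    by exists j => //; apply: val_inj; rewrite /= E.
  by exists j; rewrite jA eqxx.
by apply: card_imset => x y /(congr1 val) xy; apply: val_inj.
Qed.

Lemma perm_map_filter_enum (T1 T2 : finType) (P1 : pred T1) (P2 : pred T2)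
    (h : T1 -> T2) :
  {in P1 &, injective h} -> {in P1, forall x, P2 (h x)} ->
  (forall y, P2 y -> exists2 x, P1 x & y = h x) ->
  perm_eq (map h (filter P1 (index_enum T1))) (filter P2 (index_enum T2)).
Proof.
move=> h_inj hP1 hP2; apply: uniq_perm.
- rewrite map_inj_in_uniq ?filter_uniq ?index_enum_uniq // => x y.
  by rewrite !mem_filter => /andP[Px _] /andP[Py _]; apply: h_inj.
- by rewrite filter_uniq ?index_enum_uniq.
- move=> y; rewrite mem_filter mem_index_enum andbT.
  apply/mapP/idP => [[x]|P2y].
    by rewrite mem_filter => /andP[P1x _] ->; apply: hP1.
  by case: (hP2 _ P2y) => x P1x ->; exists x => //; rewrite mem_filter P1x mem_index_enum.
Qed.

(* An apt subset of {1, ..., m+2} either avoids m+1, and is then an apt subset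
   of {1, ..., m+1}, or is I + {m+1} with I an apt subset of {1, ..., m}.  The
   position m+1 is the ordinal [m]. *)
Definition last_free m (I : {set 'I_m.+2}) : bool := ~~ memI I m.

Definition lift_free m (I : {set 'I_m.+1}) : {set 'I_m.+2} := recast_set m.+2 I.

Definition lift_capped m (I : {set 'I_m}) : {set 'I_m.+2} :=
  inord m |: recast_set m.+2 I.

Lemma memI_lift_free m (I : {set 'I_m.+1}) : memI (lift_free I) =1 memI I.
Proof.
move=> k; rewrite memI_recast_set; case Ik: (memI I k); last by rewrite andbF.
by have := memI_lt Ik; rewrite andbT; lia.
Qed.

Lemma memI_lift_capped m (I : {set 'I_m}) k :
  memI (lift_capped I) k = (m == k) || memI I k.
Proof.
rewrite memI_setU1 memI_recast_set inordK //; congr orb.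
case Ik: (memI I k); last by rewrite andbF.
by have := memI_lt Ik; rewrite andbT; lia.
Qed.

Lemma card_lift_free m (I : {set 'I_m.+1}) : #|lift_free I| = #|I|.
Proof. exact: card_recast_set. Qed.

Lemma card_lift_capped m (I : {set 'I_m}) : #|lift_capped I| = #|I|.+1.
Proof.
rewrite /lift_capped cardsU1 inE inordK // card_recast_set; last by lia.
suff -> : memI I m = false by [].
by apply/negbTE/negP => /memI_lt; lia.
Qed.

Lemma perm_lift_free m :
  perm_eq (map (@lift_free m) (filter (@apt m.+1) (index_enum _)))
          (filter (predI (@last_free m) (@apt m.+2)) (index_enum _)).
Proof.
apply: perm_map_filter_enum.
- move=> x y _ _ E; apply: memI_inj => k.
  by rewrite -(memI_lift_free x) -(memI_lift_free y) E.
- move=> x /aptP[A1 A2]; rewrite /= /last_free memI_lift_free; apply/andP; split.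
    by apply/negP => /A1; lia.
  by apply/aptP; split => k; rewrite !memI_lift_free; [move/A1; lia | exact: A2].
- move=> y /andP[ym /aptP[A1 A2]].
  exists (recast_set m.+1 y).
    apply/aptP; split => k; rewrite !memI_recast_set.
      move=> /andP[_ yk]; have := A1 _ yk; case: (eqVneq k m) => [E|ne].
        by move: ym; rewrite /last_free; move: yk; rewrite E => ->.
      by move: ne => /eqP; lia.
    by move=> /andP[_ yk]; rewrite (negbTE (A2 _ yk)) andbF.
  apply: memI_inj => k; rewrite memI_lift_free memI_recast_set.
  by case yk: (memI y k); rewrite ?andbF ?andbT //; have := A1 _ yk; lia.
Qed.

Lemma perm_lift_capped m :
  perm_eq (map (@lift_capped m) (filter (@apt m) (index_enum _)))
          (filter (predI (predC (@last_free m)) (@apt m.+2)) (index_enum _)).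
Proof.
apply: perm_map_filter_enum.
- move=> x y /aptP[A1 _] /aptP[B1 _] E; apply: memI_inj => k.
  have := congr1 (fun I => memI I k) E; rewrite /= !memI_lift_capped.
  case: (eqVneq k m) => [->|//] _.
  case xm: (memI x m); first by move: (A1 _ xm); lia.
  by case ym: (memI y m) => //; move: (B1 _ ym); lia.
- move=> x /aptP[A1 A2]; rewrite /= /last_free memI_lift_capped eqxx /=.
  apply/aptP; split => k; rewrite !memI_lift_capped.
    by case/orP => [/eqP <-|/A1]; lia.
  case/orP => [/eqP <-|xk].
    rewrite negb_or; apply/andP; split; first by apply/eqP; lia.
    by apply/negP => /memI_lt; lia.
  by rewrite negb_or (negbTE (A2 _ xk)) andbT; apply/eqP; have := A1 _ xk; lia.
- move=> y /andP[/negPn ym /aptP[A1 A2]].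
  exists (recast_set m y).
    apply/aptP; split => k; rewrite !memI_recast_set.
      move=> /andP[km yk]; case: (eqVneq k.+1 m) => [E|ne].
        by have := A2 _ yk; rewrite E ym.
      by move: ne => /eqP; lia.
    by move=> /andP[_ yk]; rewrite (negbTE (A2 _ yk)) andbF.
  apply: memI_inj => k; rewrite memI_lift_capped memI_recast_set.
  case: (eqVneq k m) => [->|ne]; first by rewrite ym.
  by case yk: (memI y k); rewrite ?andbT ?andbF //; have := A1 _ yk; move: ne => /eqP; lia.
Qed.

Section TemperleyLieb.
Variable K : fieldType.
Notation tm := (tm K).
Notation eqv := (@eqv K).
Notation ty := (@ty K).
Notation i_ := (tid K).
Notation cup := (tcup K).
Notation cap := (tcap K).
Notation tadd := (@tadd K).

#[local] Instance eqv_equiv : Equivalence eqv.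
Proof. split; [exact: e_refl | exact: e_sym | exact: e_trans]. Qed.
#[local] Instance tcomp_proper : Proper (eqv ==> eqv ==> eqv) (@tcomp K).
Proof. by move=> ? ? ? ? ? ?; apply: e_comp. Qed.
#[local] Instance ttens_proper : Proper (eqv ==> eqv ==> eqv) (@ttens K).
Proof. by move=> ? ? ? ? ? ?; apply: e_tens. Qed.
#[local] Instance tadd_proper : Proper (eqv ==> eqv ==> eqv) tadd.
Proof. by move=> ? ? ? ? ? ?; apply: e_add. Qed.
#[local] Instance tscal_proper c : Proper (eqv ==> eqv) (@tscal K c).
Proof. by move=> ? ? ?; apply: e_scal. Qed.

#[local] Hint Resolve e_refl : core.

Definition typed (t : tm) := ty t != None.

Lemma typedP t : reflect (exists a b, ty t = Some (a, b)) (typed t).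
Proof.
rewrite /typed; case: (ty t) => [[a b]|] /=; constructor; first by exists a, b.
by case=> ? [].
Qed.

Lemma tens_assoc f g h : typed f -> typed g -> typed h ->
  eqv (ttens (ttens f g) h) (ttens f (ttens g h)).
Proof.
by move=> /typedP[a [b Hf]] /typedP[c [d Hg]] /typedP[e [k Hh]]; exact: e_tassoc Hf Hg Hh.
Qed.

Lemma tens_id0l f : typed f -> eqv (ttens (i_ 0) f) f.
Proof. by move=> /typedP[a [b Hf]]; exact: e_tunitl Hf. Qed.

Lemma tens_id0r f : typed f -> eqv (ttens f (i_ 0)) f.
Proof. by move=> /typedP[a [b Hf]]; exact: e_tunitr Hf. Qed.

Hint Rewrite addn0 add0n addn1 addn2 addSn addnS eqxx : ty_db.

(* Rewriting with the relations of [eqv] leaves typing side conditions. *)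
Ltac ty_solve := solve [eauto | rewrite /=; autorewrite with ty_db;
  repeat match goal with tyt : ty ?t = _ |- context [ty ?t] => rewrite tyt end;
  rewrite /= ?eqxx //; congr (Some (_, _)); lia].
Ltac tyside := try match goal with
  | |- ty _ = _ => ty_solve
  | |- is_true (typed _) => rewrite /typed; ty_solve
  end.

Lemma tscal_zero c a b : eqv (tscal c (tzero K a b)) (tzero K a b).
Proof.
rewrite -{1}(e_scal0 (a := a) (b := b) (f := tzero K a b)) //.
by rewrite e_scalA // mulr0 e_scal0.
Qed.

Lemma tadd_CA A B C a b : ty A = Some (a, b) -> ty B = Some (a, b) ->
    ty C = Some (a, b) ->
  eqv (tadd A (tadd B C)) (tadd B (tadd A C)).
Proof.
move=> tyA tyB tyC.
by rewrite e_addA; tyside; rewrite (e_addC (f := A)); tyside; rewrite -e_addA; tyside.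
Qed.

Lemma tadd_scalN X a b : ty X = Some (a, b) ->
  eqv (tadd X (tscal (-1) X)) (tzero K a b).
Proof.
move=> tyX; rewrite -{1}(e_scal1 tyX) -e_scalDl; tyside.
by rewrite subrr e_scal0; tyside.
Qed.

Lemma tid_split k : eqv (i_ k.+1) (ttens (i_ k) (i_ 1)).
Proof. by rewrite (@e_tid K k 1) addn1. Qed.

Lemma cupcap_tens_id1 :
  eqv (ttens (tcomp cup cap) (i_ 1)) (tcomp (ttens cup (i_ 1)) (ttens cap (i_ 1))).
Proof. by rewrite -{1}(e_idl (a := 1) (b := 1) (f := i_ 1)) // e_interchange. Qed.

Lemma cupcap_idem : eqv (tcomp (tcomp cup cap) (tcomp cup cap)) (tcomp cup cap).
Proof.
rewrite -e_assoc; tyside; rewrite (@e_assoc K _ _ _ _ cap cup cap); tyside.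
by rewrite e_circle e_idl; tyside.
Qed.

Lemma tcomp_idem_sub P Q a : ty P = Some (a, a) -> ty Q = Some (a, a) ->
    eqv (tcomp P P) P -> eqv (tcomp P Q) Q -> eqv (tcomp Q P) Q -> eqv (tcomp Q Q) Q ->
  eqv (tcomp (tadd P (tscal (-1) Q)) (tadd P (tscal (-1) Q))) (tadd P (tscal (-1) Q)).
Proof.
move=> tyP tyQ PP PQ QP QQ.
rewrite e_compDl; tyside; rewrite !e_compDr; tyside.
rewrite e_compZl; tyside; rewrite !e_compZr; tyside; rewrite e_compZl; tyside.
rewrite PP PQ QP QQ e_scalA; tyside; rewrite mulrNN mulr1 e_scal1; tyside.
rewrite -e_addA; tyside; rewrite (e_addC (f := tscal (-1) Q) (g := Q)); tyside.
by rewrite tadd_scalN; tyside; rewrite e_add0; tyside.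
Qed.

Fixpoint word (x : tm) (P : nat -> bool) (k r : nat) : tm :=
  match r with
  | 0 => i_ 0
  | r1.+1 =>
      match r1 with
      | 0 => i_ 1
      | r'.+1 => if P k then ttens x (word x P (k + 2) r')
                 else ttens (i_ 1) (word x P k.+1 r1)
      end
  end.

Fixpoint word_width (P : nat -> bool) (k r : nat) : nat :=
  match r with
  | 0 => 0
  | r1.+1 =>
      match r1 with
      | 0 => 1
      | r'.+1 => if P k then word_width P (k + 2) r'
                 else (word_width P k.+1 r1).+1
      end
  end.

Arguments word x P k r : simpl nomatch.
Arguments word_width P k r : simpl nomatch.

Lemma wordS x P k r : word x P k r.+2 =
  if P k then ttens x (word x P (k + 2) r) else ttens (i_ 1) (word x P k.+1 r.+1).
Proof. by []. Qed.

Lemma word_widthS P k r : word_width P k r.+2 =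
  if P k then word_width P (k + 2) r else (word_width P k.+1 r.+1).+1.
Proof. by []. Qed.

Lemma word_unique x P (f : nat -> nat -> tm) :
    (forall k, f k 0 = i_ 0) -> (forall k, f k 1 = i_ 1) ->
    (forall k r, f k r.+2 =
       if P k then ttens x (f (k + 2) r) else ttens (i_ 1) (f k.+1 r.+1)) ->
  forall k r, f k r = word x P k r.
Proof.
move=> f0 f1 fS k r; elim/ltn_ind: r k => -[|[|r]] IH k //.
by rewrite fS wordS !IH.
Qed.

Lemma capw_word P k r : capw K P k r = word cap P k r.
Proof. exact: word_unique. Qed.

Lemma cupw_word P k r : cupw K P k r = word cup P k r.
Proof. exact: word_unique. Qed.

Lemma ty_word_cap P k r : ty (word cap P k r) = Some (r, word_width P k r).
Proof.
elim/ltn_ind: r k => -[|[|r]] IH k //.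
by rewrite wordS word_widthS; case: (P k) => /=; rewrite IH.
Qed.

Lemma ty_word_cup P k r : ty (word cup P k r) = Some (word_width P k r, r).
Proof.
elim/ltn_ind: r k => -[|[|r]] IH k //.
by rewrite wordS word_widthS; case: (P k) => /=; rewrite IH.
Qed.

Lemma ty_capI n (I : {set 'I_n}) : ty (capI K I) = Some (n, word_width (memI I) 0 n).
Proof. by rewrite /capI capw_word ty_word_cap. Qed.

Lemma ty_cupI n (I : {set 'I_n}) : ty (cupI K I) = Some (word_width (memI I) 0 n, n).
Proof. by rewrite /cupI cupw_word ty_word_cup. Qed.

Hint Rewrite ty_word_cap ty_word_cup ty_capI ty_cupI : ty_db.

Lemma typed_word x P k r : typed x -> typed (word x P k r).
Proof.
move=> /typedP[a [b Hx]]; elim/ltn_ind: r k => -[|[|r]] IH k //.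
rewrite wordS; case: (P k).
  by have /typedP[c [d E]] := IH r (ltnW (ltnSn _)) (k + 2)%N; rewrite /typed /= Hx E.
by have /typedP[c [d E]] := IH r.+1 (ltnSn _) k.+1; rewrite /typed /= E.
Qed.

Lemma eq_word x P Q k r : (forall j, (j < k + r)%N -> P j = Q j) ->
  word x P k r = word x Q k r.
Proof.
elim/ltn_ind: r k => -[|[|r]] IH k PQ //.
rewrite !wordS PQ; last by lia.
by case: (Q k); rewrite IH // => j Hj; apply: PQ; lia.
Qed.

Lemma word_id1r x P k r : typed x -> ((0 < r)%N -> ~~ P (k + r).-1) ->
  eqv (word x P k r.+1) (ttens (word x P k r) (i_ 1)).
Proof.
move=> Hx; elim/ltn_ind: r k => -[|[|r]] IH k Pr.
- symmetry; exact: (@e_tid K 0 1).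
- by move: (Pr isT); rewrite addn1 wordS => /negbTE ->.
- move/(_ isT): Pr => Pr; rewrite !(wordS x P k); case: (P k).
  + rewrite -add2n addnA in Pr; rewrite (IH r _ (k + 2)%N) //.
    by symmetry; apply: tens_assoc => //; exact: typed_word.
  + rewrite -addSnnS in Pr; rewrite (IH r.+1 _ k.+1) //.
    by symmetry; apply: tens_assoc => //; exact: typed_word.
Qed.

Lemma word_xr x (P : nat -> bool) k r : typed x -> P (k + r)%N ->
    ((0 < r)%N -> ~~ P (k + r).-1) ->
  eqv (word x P k r.+2) (ttens (word x P k r) x).
Proof.
move=> Hx; elim/ltn_ind: r k => -[|[|r]] IH k Pr Pr1.
- by rewrite wordS -[k]addn0 Pr tens_id0r // tens_id0l.
- move: (Pr1 isT) Pr; rewrite addn1 wordS => /negbTE -> Pr.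
  by rewrite wordS Pr tens_id0r.
- move/(_ isT): Pr1 => Pr1; rewrite !(wordS x P k); case: (P k).
  + rewrite -add2n addnA in Pr Pr1; rewrite (IH r _ (k + 2)%N) //.
    by symmetry; apply: tens_assoc => //; exact: typed_word.
  + rewrite -addSnnS in Pr Pr1; rewrite (IH r.+1 _ k.+1) //.
    by symmetry; apply: tens_assoc => //; exact: typed_word.
Qed.

Section FiniteSums.
Variables (T : Type) (a b : nat).
Implicit Types (r : seq T) (F : T -> tm).

Lemma ty_tsum r (P : pred T) F : (forall i, P i -> ty (F i) = Some (a, b)) ->
  ty (\big[tadd/tzero K a b]_(i <- r | P i) F i) = Some (a, b).
Proof.
move=> tyF; elim: r => [|x r IH]; first by rewrite big_nil.
by rewrite big_cons; case Px: (P x) => //=; rewrite IH tyF // eqxx.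
Qed.

Lemma tsum_cat r1 r2 F : (forall i, ty (F i) = Some (a, b)) ->
  eqv (\big[tadd/tzero K a b]_(i <- r1 ++ r2) F i)
      (tadd (\big[tadd/tzero K a b]_(i <- r1) F i) (\big[tadd/tzero K a b]_(i <- r2) F i)).
Proof.
move=> tyF; have tyS r : ty (\big[tadd/tzero K a b]_(i <- r) F i) = Some (a, b).
  exact: ty_tsum.
elim: r1 => [|x r1 IH] /=; first by rewrite big_nil e_addC ?e_add0.
by rewrite !big_cons IH e_addA.
Qed.

Lemma tsum_tensl r F X c d : ty X = Some (c, d) -> (forall i, ty (F i) = Some (a, b)) ->
  eqv (ttens (\big[tadd/tzero K a b]_(i <- r) F i) X)
      (\big[tadd/tzero K (a + c) (b + d)]_(i <- r) ttens (F i) X).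
Proof.
move=> tyX tyF; elim: r => [|x r IH]; first by rewrite !big_nil e_tens0l.
by rewrite !big_cons e_tensDl ?IH //; [exact: ty_tsum | exact: tyX].
Qed.

Lemma tsum_scal r F c : (forall i, ty (F i) = Some (a, b)) ->
  eqv (tscal c (\big[tadd/tzero K a b]_(i <- r) F i))
      (\big[tadd/tzero K a b]_(i <- r) tscal c (F i)).
Proof.
move=> tyF; elim: r => [|x r IH]; first by rewrite !big_nil tscal_zero.
by rewrite !big_cons e_scalDr ?IH //; exact: ty_tsum.
Qed.

End FiniteSums.

Section FiniteSumsEq.
Variables (T : eqType) (a b : nat).
Implicit Types (r : seq T) (F G : T -> tm).

Lemma eq_tsum_seq r F G : (forall i, i \in r -> eqv (F i) (G i)) ->
  eqv (\big[tadd/tzero K a b]_(i <- r) F i) (\big[tadd/tzero K a b]_(i <- r) G i).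
Proof.
elim: r => [|x r IH] FG; first by rewrite !big_nil.
rewrite !big_cons IH ?FG ?mem_head // => i ir.
by apply: FG; rewrite in_cons ir orbT.
Qed.

Lemma tsum_rem r x F : (forall i, ty (F i) = Some (a, b)) -> x \in r ->
  eqv (\big[tadd/tzero K a b]_(i <- r) F i)
      (tadd (F x) (\big[tadd/tzero K a b]_(i <- rem x r) F i)).
Proof.
move=> tyF; elim: r => [|y r IH] //= xr.
case: eqP => [->|ne]; first by rewrite big_cons.
rewrite !big_cons IH; last by move: xr; rewrite in_cons => /orP[/eqP E|//]; case: ne.
by apply: tadd_CA => //; exact: ty_tsum.
Qed.

Lemma tsum_perm r1 r2 F : (forall i, ty (F i) = Some (a, b)) -> perm_eq r1 r2 ->
  eqv (\big[tadd/tzero K a b]_(i <- r1) F i) (\big[tadd/tzero K a b]_(i <- r2) F i).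
Proof.
move=> tyF; elim: r1 r2 => [|x r1 IH] r2 r12.
  by move/perm_size: r12; case: r2.
have xr2 : x \in r2 by rewrite -(perm_mem r12) mem_head.
rewrite (tsum_rem tyF xr2) big_cons IH //.
by rewrite -(perm_cons x); apply: perm_trans r12 _; apply: perm_to_rem.
Qed.

End FiniteSumsEq.

Notation jw := (jw K).

Definition jw_term n (I : {set 'I_n}) : tm :=
  tscal ((-1) ^+ #|I|) (tcomp (cupI K I) (capI K I)).

Lemma ty_jw_term n (I : {set 'I_n}) : ty (jw_term I) = Some (n, n).
Proof. by rewrite /= ty_capI ty_cupI /= eqxx. Qed.

Lemma jw_filterE n :
  jw n = \big[tadd/tzero K n n]_(I <- filter (@apt n) (index_enum {set 'I_n})) jw_term I.
Proof. by rewrite /jw big_filter. Qed.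

Lemma ty_jw n : ty (jw n) = Some (n, n).
Proof. by apply: ty_tsum => I _; exact: ty_jw_term. Qed.

Hint Rewrite ty_jw ty_jw_term : ty_db.

Lemma jw_small n : (n <= 1)%N -> eqv (jw n) (i_ n).
Proof.
move=> n1; have only_set0 : perm_eq (filter (@apt n) (index_enum _)) [:: set0].
  apply: uniq_perm => //; first by rewrite filter_uniq ?index_enum_uniq.
  move=> I; rewrite mem_filter mem_index_enum andbT inE.
  apply/idP/eqP => [/aptP[A1 _]|->].
    apply/setP => i; rewrite in_set0; apply/negP => iI.
    by have := A1 i; rewrite memI_ord iI => /(_ isT); lia.
  by apply/aptP; split => k; rewrite memI_set0.
rewrite jw_filterE (tsum_perm (@ty_jw_term n) only_set0) big_cons big_nil.
rewrite e_add0; tyside; rewrite /jw_term cards0 expr0 e_scal1; tyside.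
by case: n n1 {only_set0} => [|[|]] // _; rewrite e_idl.
Qed.

Lemma jw_term_lift_free m (I : {set 'I_m.+1}) : apt I ->
  eqv (jw_term (lift_free I)) (ttens (jw_term I) (i_ 1)).
Proof.
move=> /aptP[A1 _].
rewrite /jw_term card_lift_free /cupI /capI !cupw_word !capw_word.
rewrite !(eq_word _ (fun j _ => memI_lift_free I j)).
have Im : (0 < m.+1)%N -> ~~ memI I (0 + m.+1).-1 by move=> _; apply/negP => /A1; lia.
rewrite (word_id1r _ Im) // (word_id1r _ Im) //.
by rewrite -e_interchange; tyside; rewrite e_idl; tyside; rewrite e_tensZl; tyside.
Qed.

Lemma jw_term_lift_capped m (I : {set 'I_m}) : apt I ->
  eqv (jw_term (lift_capped I)) (tscal (-1) (ttens (jw_term I) (tcomp cup cap))).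
Proof.
move=> /aptP[A1 _].
pose P k := (m == k) || memI I k.
rewrite /jw_term card_lift_capped /cupI /capI !cupw_word !capw_word.
rewrite !(eq_word _ (Q := P) (fun j _ => memI_lift_capped I j)).
have Pm : P (0 + m)%N by rewrite /P add0n eqxx.
have Pm1 : (0 < m)%N -> ~~ P (0 + m).-1.
  move=> m0; rewrite /P negb_or; apply/andP; split; first by apply/eqP; lia.
  by apply/negP => /A1; lia.
rewrite (word_xr _ Pm Pm1) // (word_xr _ Pm Pm1) //.
have PI j : (j < 0 + m)%N -> P j = memI I j.
  by move=> jm; rewrite /P (_ : (m == j) = false) //; apply/eqP; lia.
rewrite !(eq_word _ PI) -e_interchange; tyside.
by rewrite e_tensZl; tyside; rewrite e_scalA; tyside; rewrite exprS.
Qed.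

Lemma jw_sum_last_free m :
  eqv (\big[tadd/tzero K m.+2 m.+2]_(I <- filter (predI (@last_free m) (@apt m.+2))
                                                   (index_enum _)) jw_term I)
      (ttens (jw m.+1) (i_ 1)).
Proof.
rewrite jw_filterE tsum_tensl; tyside; last exact: ty_jw_term.
rewrite !addn1 -(tsum_perm (@ty_jw_term _) (perm_lift_free m)) big_map.
by apply: eq_tsum_seq => I; rewrite mem_filter => /andP[aptI _]; apply: jw_term_lift_free.
Qed.

Lemma jw_sum_last_capped m :
  eqv (\big[tadd/tzero K m.+2 m.+2]_(I <- filter (predI (predC (@last_free m)) (@apt m.+2))
                                                   (index_enum _)) jw_term I)
      (tscal (-1) (ttens (jw m) (tcomp cup cap))).
Proof.
rewrite jw_filterE tsum_tensl; tyside; last exact: ty_jw_term.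
rewrite !addn2 tsum_scal => [|I]; last by tyside.
rewrite -(tsum_perm (@ty_jw_term _) (perm_lift_capped m)) big_map.
by apply: eq_tsum_seq => I; rewrite mem_filter => /andP[aptI _]; apply: jw_term_lift_capped.
Qed.

Lemma jwSS m : eqv (jw m.+2)
  (tadd (ttens (jw m.+1) (i_ 1)) (tscal (-1) (ttens (jw m) (tcomp cup cap)))).
Proof.
set s := filter (@apt m.+2) (index_enum _).
rewrite jw_filterE -/s -(tsum_perm (@ty_jw_term _) (permEl (perm_filterC (@last_free m) s))).
rewrite tsum_cat; last exact: ty_jw_term.
by rewrite /s -!filter_predI jw_sum_last_free jw_sum_last_capped.
Qed.

(* The correction term of j_(m+2) vanishes against a cup (resp. cap) on the last
   two strands by a zigzag relation. *)
Lemma jw_absorb_cup m :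
  eqv (tcomp (ttens (jw m.+1) (i_ 1)) (ttens (i_ m) cup)) (ttens (jw m) cup).
Proof.
case: m => [|k].
  by rewrite !jw_small // (@e_tid K 1 1) tens_id0l // e_idl; tyside.
rewrite jwSS e_tensDl; tyside; rewrite e_tensZl; tyside.
rewrite e_compDl; tyside; rewrite e_compZl; tyside.
rewrite tens_assoc; tyside; rewrite (@e_tid K 1 1) -e_interchange; tyside.
rewrite e_idr; tyside; rewrite e_idl; tyside.
rewrite tens_assoc; tyside; rewrite (tid_split k) tens_assoc; tyside.
rewrite -e_interchange; tyside.
rewrite cupcap_tens_id1 -e_assoc; tyside; rewrite e_zigzag2.
by rewrite e_comp0r; tyside; rewrite e_tens0r; tyside; rewrite tscal_zero e_add0; tyside.
Qed.

Lemma jw_absorb_cap m :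
  eqv (tcomp (ttens (i_ m) cap) (ttens (jw m.+1) (i_ 1))) (ttens (jw m) cap).
Proof.
case: m => [|k].
  by rewrite !jw_small // (@e_tid K 1 1) tens_id0l // e_idr; tyside.
rewrite jwSS e_tensDl; tyside; rewrite e_tensZl; tyside.
rewrite e_compDr; tyside; rewrite e_compZr; tyside.
rewrite tens_assoc; tyside; rewrite (@e_tid K 1 1) -e_interchange; tyside.
rewrite e_idr; tyside; rewrite e_idl; tyside.
rewrite (tid_split k) tens_assoc; tyside; rewrite tens_assoc; tyside.
rewrite -e_interchange; tyside.
rewrite cupcap_tens_id1 e_assoc; tyside; rewrite e_zigzag1.
by rewrite e_comp0l; tyside; rewrite e_tens0r; tyside; rewrite tscal_zero e_add0; tyside.
Qed.

Lemma jw_idem m : eqv (tcomp (jw m) (jw m)) (jw m).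
Proof.
elim/ltn_ind: m => -[|[|k]] IH; try by rewrite jw_small // e_idl; tyside.
set P := ttens (jw k.+1) (i_ 1); set Q := ttens (jw k) (tcomp cup cap).
set U := ttens (i_ k) cup; set C := ttens (i_ k) cap.
have tyP : ty P = Some (k.+2, k.+2) by tyside.
have tyQ : ty Q = Some (k.+2, k.+2) by tyside.
have QE : eqv Q (tcomp P (tcomp U C)).
  by rewrite e_assoc; tyside; rewrite jw_absorb_cup -e_interchange; tyside; rewrite e_idr; tyside.
have QE' : eqv Q (tcomp U (tcomp C P)).
  by rewrite jw_absorb_cap -e_interchange; tyside; rewrite e_idl; tyside.
have PP : eqv (tcomp P P) P.
  by rewrite -e_interchange; tyside; rewrite IH // e_idl; tyside.
rewrite jwSS -/P -/Q; apply: (tcomp_idem_sub tyP tyQ PP).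
- by rewrite {1}QE e_assoc; tyside; rewrite PP -QE.
- by rewrite {1}QE' -!e_assoc; tyside; rewrite PP -QE'.
- by rewrite -e_interchange; tyside; rewrite IH // cupcap_idem.
Qed.

Lemma jw_recursion m : let J := ttens (jw m.+1) (i_ 1) in
  eqv (jw m.+2) (tadd J (tscal (-1) (tcomp J (tcomp (ttens (i_ m) cup)
        (tcomp (ttens (i_ m) cap) J))))).
Proof.
move=> J; rewrite jwSS /J jw_absorb_cap e_assoc; tyside.
by rewrite jw_absorb_cup -e_interchange; tyside; rewrite jw_idem.
Qed.

End TemperleyLieb.

Theorem mainTheorem7 (K : fieldType) (n : nat) : (2 <= n)%N ->
  let J := ttens (jw K n.-1) (tid K 1) in
  eqv (jw K n)
      (tadd J (tscal (-1)
         (tcomp J (tcomp (ttens (tid K (n - 2)) (tcup K))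
                         (tcomp (ttens (tid K (n - 2)) (tcap K)) J))))).
Proof.
case: n => [|[|m]] // _.
by rewrite subn2; exact: jw_recursion.
Qed.
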